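(* In the setting described in the context, if either ($0<v_0<1$ and $\omega_0<-\frac{\nu}{2}f_\infty(v_0)$) or ($v_0>1$ and $\omega_0>-\frac{\nu}{2}f_\infty(v_0)$), then type B blowup occurs.
   Context: Fix $\nu>0$, $v_0>0$ with $v_0\neq1$, and $\omega_0\in\mathbb{R}$. Consider the real ODE system $\frac{d\omega_{-2,i}}{dt}=\omega_{-2,i}^2\frac{1-2v_c^2+5v_c^4}{4v_c^2(1-v_c^2)^2}-\nu\omega_{-2,i}$, $\frac{dv_c}{dt}=-\omega_{-2,i}\frac{1+v_c^2}{4v_c(1-v_c^2)}$ with $v_c(0)=v_0$, $\omega_{-2,i}(0)=\omega_0$; its solution (continued through $v_c=1$) is characterized as follows. Let $F(v)=\frac{v(v^2-1)}{(v^2+1)^2}+\arctan v$, which is a strictly increasing bijection from $(0,\infty)$ onto $(0,\pi/2)$, and let $G(t)=F(v_0)+\frac{2\omega_0 v_0(1-e^{-\nu t})}{\nu(v_0^2-1)(v_0^2+1)^2}$. Then $v_c(t)$ is defined by $F(v_c(t))=G(t)$ for as long as $G(t)\in(0,\pi/2)$, and $\omega_{-2,i}(t)=\omega_0e^{-\nu t}\frac{v_0}{v_c(t)}\frac{v_c(t)^2-1}{v_0^2-1}\left(\frac{v_c(t)^2+1}{v_0^2+1}\right)^2$. Type A blowup means: there is a finite $t_c>0$ with $v_c(t)>0$ on $[0,t_c)$ and $v_c(t)\to0^+$ as $t\to t_c^-$. Type B blowup means: there is a finite $t_c>0$ with $v_c(t)\in(0,\infty)$ on $[0,t_c)$ and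 $v_c(t)\to+\infty$ as $t\to t_c^-$. Here $f_0(x)=(x^2-1)^2+\frac{(x^2+1)^2}{x}(x^2-1)\arctan(x)$ and $f_\infty(x)=(x^2-1)^2+\frac{(x^2+1)^2}{x}(x^2-1)\left(\arctan(x)-\frac{\pi}{2}\right)$ for $x>0$. *)

From Stdlib Require Import Reals Lra.
From Coquelicot Require Import Coquelicot.
Open Scope R_scope.

Definition Fv (v : R) : R :=
  v * (v ^ 2 - 1) / (v ^ 2 + 1) ^ 2 + atan v.

Definition Gt (nu v0 w0 t : R) : R :=
  Fv v0 + 2 * w0 * v0 * (1 - exp (- nu * t))
          / (nu * (v0 ^ 2 - 1) * (v0 ^ 2 + 1) ^ 2).

Definition f_inf (x : R) : R :=
  (x ^ 2 - 1) ^ 2 + (x ^ 2 + 1) ^ 2 / x * (x ^ 2 - 1) * (atan x - PI / 2).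

Definition is_vc (nu v0 w0 : R) (vc : R -> R) : Prop :=
  forall t, 0 <= t -> 0 < Gt nu v0 w0 t < PI / 2 ->
    0 < vc t /\ Fv (vc t) = Gt nu v0 w0 t.

(* Type B blowup: finite tc > 0, v_c(t) in (0,oo) (i.e. defined) on [0,tc),
   and v_c(t) -> +oo as t -> tc^- . *)
Definition typeB_blowup (nu v0 w0 : R) (vc : R -> R) : Prop :=
  exists tc, 0 < tc /\
    (forall t, 0 <= t < tc -> 0 < Gt nu v0 w0 t < PI / 2 /\ 0 < vc t) /\
    filterlim vc (at_left tc) (Rbar_locally p_infty).

(** [G] is the saturating exponential [F(v0) + A (1 - e^{-nu t})] whose amplitude [A] is
    computed in [Gamp]; the hypotheses on [w0] say exactly that [F(v0) + A > pi/2].  Hence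
    [G] increases through [pi/2] at a finite time [tc], and since [F] is an increasing
    bijection of [(0, oo)] onto [(0, pi/2)], the relation [F(v_c(t)) = G(t)] forces
    [v_c(t) -> +oo] as [t -> tc^-]. *)

From Stdlib Require Import Reals Lra.
From Coquelicot Require Import Coquelicot.
Open Scope R_scope.

Lemma is_derive_Fv x : is_derive Fv x (8 * x ^ 2 / (x ^ 2 + 1) ^ 3).
Proof.
  assert (Hrat : is_derive (fun v => v * (v ^ 2 - 1) / (v ^ 2 + 1) ^ 2) x
                   ((- x ^ 4 + 6 * x ^ 2 - 1) / (x ^ 2 + 1) ^ 3)).
  { auto_derive; [nra | field; nra]. }
  replace (8 * x ^ 2 / (x ^ 2 + 1) ^ 3)
    with ((- x ^ 4 + 6 * x ^ 2 - 1) / (x ^ 2 + 1) ^ 3 + / (1 + x²))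
    by (unfold Rsqr; field; nra).
  exact (is_derive_plus _ _ x _ _ Hrat (is_derive_atan x)).
Qed.

Lemma Fv_increasing a b : 0 < a -> a < b -> Fv a < Fv b.
Proof.
  intros Ha Hab.
  apply (incr_function Fv (Finite 0) p_infty (fun x => 8 * x ^ 2 / (x ^ 2 + 1) ^ 3));
    try (simpl; lra).
  - intros x _ _. apply is_derive_Fv.
  - intros x Hx _. simpl in Hx. apply Rdiv_lt_0_compat; [nra | apply pow_lt; nra].
Qed.

Lemma Fv_lt_inv a b : 0 < a -> 0 < b -> Fv a < Fv b -> a < b.
Proof.
  intros Ha Hb HF. destruct (Rlt_le_dec a b) as [Hab | Hba]; [exact Hab |].
  destruct (Rle_lt_or_eq_dec _ _ Hba) as [Hlt | ->]; [| lra].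
  assert (Fv b < Fv a) by (apply Fv_increasing; lra). lra.
Qed.

Lemma Fv_nonneg v : 0 <= v -> 0 <= Fv v.
Proof.
  intros Hv.
  assert (HF0 : Fv 0 = 0) by (unfold Fv; rewrite atan_0; field).
  destruct (MVT_gen Fv 0 v (fun x => 8 * x ^ 2 / (x ^ 2 + 1) ^ 3)) as [c [_ Hc]].
  - intros x _. apply is_derive_Fv.
  - intros x _. apply continuity_pt_filterlim.
    apply (ex_derive_continuous Fv x). eexists. apply is_derive_Fv.
  - assert (Hd : 0 <= 8 * c ^ 2 / (c ^ 2 + 1) ^ 3).
    { apply Rmult_le_pos; [nra | apply Rlt_le, Rinv_0_lt_compat, pow_lt; nra]. }
    rewrite HF0 in Hc. nra.
Qed.

Lemma Fv_pos v : 0 < v -> 0 < Fv v.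
Proof.
  intros Hv.
  assert (0 <= Fv (v / 2)) by (apply Fv_nonneg; lra).
  assert (Fv (v / 2) < Fv v) by (apply Fv_increasing; lra).
  lra.
Qed.

(* [atan (1/v) = pi/2 - atan v] for [v > 0], and the rational part of [F] is odd under [v -> 1/v]. *)
Lemma Fv_add_inv v : 0 < v -> Fv v + Fv (/ v) = PI / 2.
Proof. intros Hv. unfold Fv. rewrite atan_inv by exact Hv. field. split; nra. Qed.

Lemma Fv_lt_pi2 v : 0 < v -> Fv v < PI / 2.
Proof.
  intros Hv. rewrite <- (Fv_add_inv v Hv).
  assert (0 < Fv (/ v)) by apply Fv_pos, Rinv_0_lt_compat, Hv.
  lra.
Qed.

Lemma filterlim_Fv_inv_pinfty (vc g : R -> R) (tc : R) :
  at_left tc (fun t => 0 < vc t /\ Fv (vc t) = g t) ->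
  filterlim g (at_left tc) (locally (PI / 2)) ->
  filterlim vc (at_left tc) (Rbar_locally p_infty).
Proof.
  intros Hvc Hg P [M HM].
  set (M' := Rmax M 1).
  assert (HM' : 0 < M') by (apply Rlt_le_trans with 1; [lra | apply Rmax_r]).
  assert (Hgap : 0 < PI / 2 - Fv M') by (generalize (Fv_lt_pi2 M' HM'); lra).
  assert (Hnear := proj1 (filterlim_locally g (PI / 2)) Hg (mkposreal _ Hgap)).
  unfold filtermap. eapply filter_imp; [| exact (filter_and _ _ Hvc Hnear)].
  intros t [[Hpos HF] Hball].
  apply Rabs_lt_between in Hball. unfold minus, plus, opp in Hball. simpl in Hball.
  apply HM, Rle_lt_trans with M'; [apply Rmax_l |].
  apply Fv_lt_inv; [exact HM' | exact Hpos | rewrite HF; lra].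
Qed.

Lemma exp_saturation_crossing (b c L nu : R) :
  0 < nu -> b < L < b + c ->
  exists tc, 0 < tc /\
    (forall t, 0 <= t < tc -> b <= b + c * (1 - exp (- nu * t)) < L) /\
    filterlim (fun t => b + c * (1 - exp (- nu * t))) (at_left tc) (locally L).
Proof.
  intros Hnu [HbL HLc].
  set (h := fun t => b + c * (1 - exp (- nu * t))).
  set (r := (L - b) / c).
  assert (Hr : 0 < r < 1).
  { unfold r. split; [apply Rdiv_lt_0_compat; lra |].
    apply Rlt_div_l; lra. }
  set (tc := - ln (1 - r) / nu).
  assert (Hln : ln (1 - r) < 0) by (rewrite <- ln_1; apply ln_increasing; lra).
  assert (Hexp_tc : exp (- nu * tc) = 1 - r).
  { unfold tc. replace (- nu * (- ln (1 - r) / nu)) with (ln (1 - r)) by (field; lra).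
    apply exp_ln; lra. }
  assert (Hh_tc : h tc = L) by (unfold h; rewrite Hexp_tc; unfold r; field; lra).
  exists tc. split; [apply Rdiv_lt_0_compat; lra | split].
  - intros t [Ht0 Httc].
    assert (Hle1 : exp (- nu * t) <= 1).
    { rewrite <- exp_0. destruct (Rle_lt_or_eq_dec _ _ Ht0) as [Hpos | <-].
      - apply Rlt_le, exp_increasing. nra.
      - rewrite Rmult_0_r. lra. }
    assert (Hlt : exp (- nu * tc) < exp (- nu * t)) by (apply exp_increasing; nra).
    fold (h t). rewrite <- Hh_tc. unfold h. split; nra.
  - rewrite <- Hh_tc.
    apply (filterlim_filter_le_1 _ (@filter_le_within _ (locally tc) _ (fun u => u < tc))).
    apply (ex_derive_continuous h). unfold h. auto_derive. auto.
Qed.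

Definition Gamp (nu v0 w0 : R) : R :=
  2 * w0 * v0 / (nu * (v0 ^ 2 - 1) * (v0 ^ 2 + 1) ^ 2).

Lemma Gt_Gamp nu v0 w0 t :
  Gt nu v0 w0 t = Fv v0 + Gamp nu v0 w0 * (1 - exp (- nu * t)).
Proof. unfold Gt, Gamp, Rdiv. ring. Qed.

Lemma f_inf_Fv x : 0 < x ->
  x * f_inf x = (x ^ 2 - 1) * (x ^ 2 + 1) ^ 2 * (Fv x - PI / 2).
Proof. intros Hx. unfold f_inf, Fv. field. split; nra. Qed.

(* Both alternatives say [D (2 w0 v0 - nu D (pi/2 - F(v0))) > 0] with [D = (v0^2-1)(v0^2+1)^2]. *)
Lemma Gamp_gt nu v0 w0 : 0 < nu ->
  (0 < v0 < 1 /\ w0 < - (nu / 2) * f_inf v0) \/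
  (1 < v0 /\ w0 > - (nu / 2) * f_inf v0) ->
  PI / 2 - Fv v0 < Gamp nu v0 w0.
Proof.
  intros Hnu Hcase.
  assert (Hv0 : 0 < v0) by (destruct Hcase as [[[? _] _] | [? _]]; lra).
  set (D := (v0 ^ 2 - 1) * (v0 ^ 2 + 1) ^ 2).
  assert (HF := f_inf_Fv v0 Hv0). fold D in HF.
  assert (Hsq : 0 < (v0 ^ 2 + 1) ^ 2) by (apply pow_lt; nra).
  assert (Hsign : 0 < D * (2 * w0 * v0 - nu * D * (PI / 2 - Fv v0))).
  { destruct Hcase as [[Hv Hw] | [Hv Hw]].
    - assert (HD : D < 0).
      { assert (v0 ^ 2 - 1 < 0) by nra. unfold D. nra. }
      assert (Hw' : 2 * w0 * v0 < - nu * (v0 * f_inf v0)) by nra.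
      rewrite HF in Hw'. nra.
    - assert (HD : 0 < D).
      { assert (0 < v0 ^ 2 - 1) by nra. unfold D. nra. }
      assert (Hw' : 2 * w0 * v0 > - nu * (v0 * f_inf v0)) by nra.
      rewrite HF in Hw'. nra. }
  assert (HD0 : D <> 0) by (intros HD; rewrite HD in Hsign; lra).
  assert (HA : Gamp nu v0 w0 * (nu * D) = 2 * w0 * v0).
  { assert (Hv1 : v0 ^ 2 - 1 <> 0) by (intros Hz; apply HD0; unfold D; rewrite Hz; ring).
    unfold Gamp, D. field. repeat split; [nra | exact Hv1 | lra]. }
  rewrite <- HA in Hsign.
  replace (D * (Gamp nu v0 w0 * (nu * D) - nu * D * (PI / 2 - Fv v0)))
    with ((nu * (D * D)) * (Gamp nu v0 w0 - (PI / 2 - Fv v0))) in Hsign by ring.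
  assert (HD2 : 0 < nu * (D * D)) by (apply Rmult_lt_0_compat; [lra | nra]).
  rewrite <- (Rmult_0_r (nu * (D * D))) in Hsign.
  apply Rmult_lt_reg_l in Hsign; [lra | exact HD2].
Qed.

Theorem lemma3p6 (nu v0 w0 : R) (vc : R -> R) :
  0 < nu -> 0 < v0 -> v0 <> 1 ->
  is_vc nu v0 w0 vc ->
  ((0 < v0 < 1 /\ w0 < - (nu / 2) * f_inf v0) \/
   (1 < v0 /\ w0 > - (nu / 2) * f_inf v0)) ->
  typeB_blowup nu v0 w0 vc.
Proof.
  intros Hnu Hv0 _ Hvc Hcase.
  assert (HF0 := Fv_pos v0 Hv0).
  assert (Hcross : Fv v0 < PI / 2 < Fv v0 + Gamp nu v0 w0).
  { generalize (Fv_lt_pi2 v0 Hv0) (Gamp_gt nu v0 w0 Hnu Hcase). lra. }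
  destruct (exp_saturation_crossing _ _ _ _ Hnu Hcross) as [tc [Htc [HGbounds HGlim]]].
  assert (HG : forall t, 0 <= t < tc -> 0 < Gt nu v0 w0 t < PI / 2).
  { intros t Ht. rewrite Gt_Gamp. generalize (HGbounds t Ht). lra. }
  exists tc. split; [exact Htc | split].
  - intros t Ht. split; [exact (HG t Ht) | exact (proj1 (Hvc t (proj1 Ht) (HG t Ht)))].
  - apply (filterlim_Fv_inv_pinfty vc (Gt nu v0 w0)).
    + exists (mkposreal tc Htc). intros t Hball Ht.
      apply Rabs_lt_between in Hball. unfold minus, plus, opp in Hball. simpl in Hball.
      apply Hvc; [lra | apply HG; lra].
    + eapply filterlim_ext; [| exact HGlim]. intros t. symmetry. apply Gt_Gamp.
Qed.
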